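(* Every deterministic algorithm requires $\Omega(\log n)$ vertex evaluations in the worst case to find the sink of an $n$-dimensional realizable Matoušek-type USO.
   Context: All vectors and matrices are over $GF(2)$; $\oplus$ denotes xor. An orientation of the hypercube $\{0,1\}^n$ is given by an outmap $o:\{0,1\}^n\to\{0,1\}^n$, the edge $\{v,v\oplus e_i\}$ being directed away from $v$ iff $o(v)_i=1$. An $n$-dimensional Matoušek-type USO is an orientation $o(v)=M(v\oplus s)$ with $M=PAP^T$ for a permutation matrix $P$ and an invertible upper-triangular $A\in\{0,1\}^{n\times n}$, and $s\in\{0,1\}^n$ its unique sink. Its dimension influence graph is the directed graph on $[n]$ with edge $(i,j)$ iff $M_{j,i}=1$. A USO is realizable if it arises from the (Stickney–Watson) reduction of a non-degenerate P-matrix LCP instance to USO sink-finding; a Matoušek-type USO is realizable iff its dimension influence graph is the reflexive transitive closure of a branching (a forest of rooted trees with edges directed away from the roots). A sink-finding algorithm queries vertices $v$ and receives $o(v)$. *)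

From HB Require Import structures.
From mathcomp Require Import all_boot all_order all_algebra all_fingroup.
From mathcomp Require Import Rstruct.
From Stdlib Require Rdefinitions.
Notation R := Rdefinitions.R.

Set Implicit Arguments.
Unset Strict Implicit.
Unset Printing Implicit Defensive.

Import Order.TTheory GRing.Theory Num.Theory.
Local Open Scope ring_scope.

Definition vertex (n : nat) := 'cV['F_2]_n.

(* an orientation is given by its outmap *)
Definition outmap (n : nat) := vertex n -> vertex n.

Definition upper_triangular (n : nat) (A : 'M['F_2]_n) : Prop :=
  forall i j : 'I_n, (j < i)%N -> A i j = 0.

Definition matousek_type (n : nat) (o : outmap n) : Prop :=
  exists (p : 'S_n) (A : 'M['F_2]_n) (s : vertex n),
    upper_triangular A /\ A \in unitmx /\
    forall v : vertex n,
      o v = (perm_mx p *m A *m (perm_mx p)^T) *m (v + s).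

Definition principal_submx (n : nat) (M : 'M[R]_n) (S : {set 'I_n}) :
  'M[R]_#|S| :=
  mxsub (@enum_val _ (mem S)) (@enum_val _ (mem S)) M.

Definition P_matrix (n : nat) (M : 'M[R]_n) : Prop :=
  forall S : {set 'I_n}, 0 < \det (principal_submx M S).

Definition vset (n : nat) (v : vertex n) : {set 'I_n} := [set i | v i 0 != 0].

(* complementary basis matrix of LCP  w - M z = q  for the basis J:
   column i is -M_{.,i} if i \in J (z_i basic) and e_i otherwise (w_i basic) *)
Definition basis_mx (n : nat) (M : 'M[R]_n) (J : {set 'I_n}) : 'M[R]_n :=
  \matrix_(i, j) (if j \in J then - M i j else (i == j)%:R).

Definition basic_sol (n : nat) (M : 'M[R]_n) (q : 'cV[R]_n) (J : {set 'I_n})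
  : 'cV[R]_n := invmx (basis_mx M J) *m q.

Definition lcp_nondegenerate (n : nat) (M : 'M[R]_n) (q : 'cV[R]_n) : Prop :=
  forall (J : {set 'I_n}) (i : 'I_n), basic_sol M q J i 0 != 0.

(* Stickney--Watson orientation: the edge in direction i at vertex v is
   outgoing iff the i-th basic variable of the basis J(v) is negative *)
Definition lcp_outmap (n : nat) (M : 'M[R]_n) (q : 'cV[R]_n) : outmap n :=
  fun v => \col_i (if basic_sol M q (vset v) i 0 < 0 then 1 else 0).

Definition realizable (n : nat) (o : outmap n) : Prop :=
  exists (M : 'M[R]_n) (q : 'cV[R]_n),
    P_matrix M /\ lcp_nondegenerate M q /\ forall v, o v = lcp_outmap M q v.

(* A deterministic algorithm chooses the next query from the history of
   (queried vertex, returned outmap value) pairs. *)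
Definition algorithm (n : nat) := seq (vertex n * vertex n) -> vertex n.

Fixpoint history (n : nat) (A : algorithm n) (o : outmap n) (k : nat)
  : seq (vertex n * vertex n) :=
  match k with
  | 0 => [::]
  | k.+1 => let h := history A o k in rcons h (A h, o (A h))
  end.

(* the (k+1)-st queried vertex (k = 0, 1, ...) *)
Definition query (n : nat) (A : algorithm n) (o : outmap n) (k : nat) : vertex n :=
  A (history A o k).

Definition finds_sink_within (n : nat) (A : algorithm n) (o : outmap n) (t : nat)
  : Prop :=
  exists k, (k < t)%N /\ o (query A o k) = 0.

From mathcomp Require Import all_boot all_order all_algebra all_fingroup zify.
From mathcomp Require Import Rstruct ring.

Set Implicit Arguments.
Unset Strict Implicit.
Unset Printing Implicit Defensive.

Import Order.TTheory GRing.Theory Num.Theory.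
Local Open Scope ring_scope.

(* An adversary answers with outmaps of the form o v = M (v + s), M = P U P^T
   with U the upper unitriangular all-ones matrix, so that (M y)_j is the sum of
   the y_i over the coordinates i not preceding j in the linear order given by P.
   The order is revealed only gradually: the adversary keeps a fixed prefix
   followed by blocks, at first all singletons.  For the k-th query x_k it sets
   y_k = x_k + x_0, keeps the blocks with even y_k-sum, concatenates the odd ones
   in pairs and moves a leftover odd block to the prefix.  Now every block has
   even y_k-sum, so no later rearrangement of whole blocks changes the suffix sums
   of y_k, and the answer M (y_k + e_f) given for x_k stays correct for the final
   order, in which f is the last coordinate and s = x_0 + e_f.  Each query at
   least halves the number of blocks, so after log2 n queries a block survives.
   It has even sum for every y_k, while e_f has odd sum on the block containing f;
   hence no y_k equals e_f, i.e. no query so far was the sink.  Finally M (v + s)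
   comes from a P-matrix LCP whose matrix, ordered along P, is unit triangular
   with entries +-2 above the diagonal; the sign of each basic variable is a
   product of (-1)^(v_l) over the later coordinates l. *)

Lemma perm_rank_le_id n (s : 'S_n) (rank : 'I_n -> nat) :
  injective rank -> (forall i, rank i <= rank (s i))%N -> s = 1%g.
Proof.
move=> rank_inj rank_le.
have sum_eq : (\sum_i rank i == \sum_i rank (s i))%N.
  by rewrite [X in X == _](reindex_inj (@perm_inj _ s)).
have [_] := @leqif_sum _ xpredT _ _ _ (fun i _ => leqif_eq (rank_le i)).
rewrite sum_eq => /esym/forallP rank_eq.
by apply/permP => i; rewrite perm1; apply: rank_inj; apply/esym/eqP/rank_eq.
Qed.

Lemma det_trig_rank (R : comNzRingType) n (A : 'M[R]_n) (rank : 'I_n -> nat) :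
  injective rank -> (forall i j, (rank j < rank i)%N -> A i j = 0) ->
  \det A = \prod_i A i i.
Proof.
move=> rank_inj A_trig; rewrite /determinant (bigD1 1%g) //= odd_perm1 expr0 mul1r.
rewrite [X in X + _ = _](eq_bigr (fun i => A i i)) => [|i _]; last by rewrite perm1.
rewrite [X in _ + X = _]big1 ?addr0 // => s s_neq1.
have [i lt_si] : exists i, (rank (s i) < rank i)%N.
  apply/existsP; apply: contraR s_neq1 => /existsPn rank_le.
  by apply/eqP/(perm_rank_le_id rank_inj) => i; rewrite leqNgt rank_le.
by rewrite (bigD1 i) //= A_trig // mul0r mulr0.
Qed.

Lemma F2_eq1 (x : 'F_2) : x != 0 -> x = 1.
Proof. by case: x => [[|[|m]] lt_m2] //= _; apply/val_inj. Qed.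

Lemma F2_addr_neq0 (x y : 'F_2) : (x + y != 0) = (x != 0) (+) (y != 0).
Proof.
have F2_1 : (1 + 1 : 'F_2) = 0 by apply/val_inj.
have [-> | /F2_eq1->] := eqVneq x 0; have [-> | /F2_eq1->] := eqVneq y 0;
  by rewrite ?addr0 ?add0r ?F2_1 ?eqxx ?oner_eq0.
Qed.

Lemma seq_ind2 (U : Type) (P : seq U -> Prop) :
  P [::] -> (forall A, P [:: A]) -> (forall A B r, P r -> P (A :: B :: r)) ->
  forall l, P l.
Proof.
move=> P0 P1 P2 l; suff [] : P l /\ forall A, P (A :: l) by [].
by elim: l => [|B l [IHl IHAl]]; split=> // A; apply: P2.
Qed.

Lemma uniq_flatten_mem (T : eqType) (Qs : seq (seq T)) Q :
  uniq (flatten Qs) -> Q \in Qs -> uniq Q.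
Proof.
elim: Qs => //= Q0 Qs IHQs; rewrite cat_uniq inE => /and3P[uQ0 _ uQs].
by case/predU1P=> [-> // | /IHQs]; apply.
Qed.

Lemma sum_indicator_uniq (R : pzSemiRingType) (T : eqType) (s : seq T) x :
  uniq s -> x \in s -> \sum_(i <- s) ((i == x)%:R : R) = 1.
Proof.
move=> us xs; rewrite -natr_sum.
have -> : (\sum_(i <- s) (i == x))%N = count_mem x s.
  by rewrite -sum1_count [RHS]big_mkcond.
by rewrite count_uniq_mem ?xs.
Qed.

(** * Suffix sums along block decompositions *)

Section SuffixSums.
Variables (T : eqType) (V : nmodType) (F : T -> V).

Definition suffix_sum (s : seq T) (j : T) : V := \sum_(i <- drop (index j s) s) F i.

Definition zero_sum_blocks (Qs : seq (seq T)) : Prop :=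
  forall Q, Q \in Qs -> \sum_(i <- Q) F i = 0.

Lemma suffix_sum_catl s1 s2 j : j \in s1 ->
  suffix_sum (s1 ++ s2) j = suffix_sum s1 j + \sum_(i <- s2) F i.
Proof.
by move=> j_s1; rewrite /suffix_sum index_cat j_s1 drop_cat index_mem j_s1 big_cat.
Qed.

Lemma suffix_sum_catr s1 s2 j : j \notin s1 ->
  suffix_sum (s1 ++ s2) j = suffix_sum s2 j.
Proof.
move=> j_s1; rewrite /suffix_sum index_cat (negbTE j_s1) drop_cat.
by rewrite ltnNge leq_addr /= addKn.
Qed.

Lemma sum_flatten_zero_sum_blocks Qs :
  zero_sum_blocks Qs -> \sum_(i <- flatten Qs) F i = 0.
Proof. by move=> QsF; rewrite big_flatten big1_seq // => Q /andP[_ /QsF]. Qed.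

Lemma suffix_sum_flatten Qs Q j : uniq (flatten Qs) -> zero_sum_blocks Qs ->
  Q \in Qs -> j \in Q -> suffix_sum (flatten Qs) j = suffix_sum Q j.
Proof.
elim: Qs => [|Q0 Qs IHQs] //=; rewrite cat_uniq => /and3P[_ Q0_Qs uQs] QsF.
have QsF' : zero_sum_blocks Qs by move=> Q' Q'_Qs; apply: QsF; rewrite inE Q'_Qs orbT.
rewrite inE => /predU1P[-> j_Q0 | Q_Qs j_Q].
  by rewrite suffix_sum_catl // sum_flatten_zero_sum_blocks // addr0.
have j_Q0 : j \notin Q0.
  by apply: contra Q0_Qs => j_Q0; apply/hasP; exists j => //; apply/flattenP; exists Q.
by rewrite suffix_sum_catr // IHQs.
Qed.

End SuffixSums.

Section PairBlocks.
Variable T : eqType.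

Fixpoint pair_blocks (l : seq (seq T)) : seq (seq T) * seq T :=
  match l with
  | A :: B :: r => ((A ++ B) :: (pair_blocks r).1, (pair_blocks r).2)
  | [:: A] => ([::], A)
  | [::] => ([::], [::])
  end.

Lemma pair_blocks_cat l : flatten (pair_blocks l).1 ++ (pair_blocks l).2 = flatten l.
Proof.
by elim/seq_ind2: l => [|A|A B r IHr] //=; rewrite ?cats0 // -catA IHr catA.
Qed.

Lemma size_pair_blocks l : size (pair_blocks l).1 = (size l)./2.
Proof. by elim/seq_ind2: l => [|A|A B r /= ->]. Qed.

Lemma pair_blocks_rest l : (pair_blocks l).2 \in [::] :: l.
Proof.
elim/seq_ind2: l => [|A|A B r] /=; rewrite !inE ?eqxx ?orbT //.
by case/orP=> ->; rewrite ?orbT.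
Qed.

Lemma mem_pair_blocks l P : P \in (pair_blocks l).1 ->
  exists A B, [/\ A \in l, B \in l & P = A ++ B].
Proof.
elim/seq_ind2: l => [|A|A B r IHr] //=; rewrite inE => /predU1P[-> | /IHr].
  by exists A, B; rewrite !inE !eqxx orbT.
by case=> [A' [B' [A'r B'r ->]]]; exists A', B'; rewrite !inE A'r B'r !orbT.
Qed.

Lemma pair_blocks_regroup l : exists l',
  [/\ flatten (pair_blocks l).1 = flatten l', {subset l' <= l}
    & {subset l <= (pair_blocks l).2 :: l'}].
Proof.
elim/seq_ind2: l => [|A|A B r [l' [fl' l'r rl']]].
- by exists [::].
- by exists [::]; split=> // Q; rewrite !inE.
exists [:: A, B & l']; split; first by rewrite /= fl' catA.
  by move=> Q; rewrite !inE => /or3P[-> | -> | /l'r ->]; rewrite ?orbT.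
move=> Q; rewrite !inE => /or3P[-> | -> | /rl']; rewrite ?eqxx ?orbT //.
by rewrite inE => /orP[-> | ->]; rewrite ?orbT.
Qed.

End PairBlocks.

Section Refinement.
Variable T : eqType.

Definition state := (seq T * seq (seq T))%type.

Definition order_of (S : state) : seq T := S.1 ++ flatten S.2.

Definition even_blocks (G : T -> 'F_2) (Qs : seq (seq T)) :=
  [seq Q <- Qs | \sum_(i <- Q) G i == 0].

Definition odd_blocks (G : T -> 'F_2) (Qs : seq (seq T)) :=
  [seq Q <- Qs | \sum_(i <- Q) G i != 0].

Definition refine (G : T -> 'F_2) (S : state) : state :=
  (S.1 ++ (pair_blocks (odd_blocks G S.2)).2,
   even_blocks G S.2 ++ (pair_blocks (odd_blocks G S.2)).1).

Variable G : T -> 'F_2.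

Lemma perm_refine S : perm_eq (order_of (refine G S)) (order_of S).
Proof.
rewrite /order_of /refine /= -catA perm_cat2l flatten_cat perm_catC -catA.
rewrite pair_blocks_cat -flatten_cat; apply: perm_flatten.
by rewrite perm_filterC.
Qed.

Lemma refine_zero_sum (V : nmodType) (F : T -> V) S :
  zero_sum_blocks F S.2 -> zero_sum_blocks F (refine G S).2.
Proof.
move=> SF Q; rewrite mem_cat => /orP[|/mem_pair_blocks[A [B [+ + ->]]]].
  by rewrite mem_filter => /andP[_ /SF].
by rewrite !mem_filter big_cat => /andP[_ /SF->] /andP[_ /SF->]; exact: addr0.
Qed.

Lemma refine_zero_sum_self S : zero_sum_blocks G (refine G S).2.
Proof.
move=> Q; rewrite mem_cat => /orP[|/mem_pair_blocks[A [B [+ + ->]]]].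
  by rewrite mem_filter => /andP[/eqP].
rewrite !mem_filter big_cat => /andP[GA _] /andP[GB _].
by apply/eqP/negbNE; rewrite F2_addr_neq0 GA GB.
Qed.

Lemma refine_nonempty S : (forall Q, Q \in S.2 -> Q != [::]) ->
  forall Q, Q \in (refine G S).2 -> Q != [::].
Proof.
move=> S_nonempty Q; rewrite mem_cat => /orP[|/mem_pair_blocks[A [B [+ _ ->]]]].
  by rewrite mem_filter => /andP[_ /S_nonempty].
by rewrite mem_filter => /andP[_ /S_nonempty]; case: A.
Qed.

Lemma size_refine S : ((size S.2)./2 <= size (refine G S).2)%N.
Proof.
have -> : size S.2 = (size (even_blocks G S.2) + size (odd_blocks G S.2))%N.
  by rewrite !size_filter -(count_predC (fun Q => \sum_(i <- Q) G i == 0)).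
rewrite size_cat size_pair_blocks -!divn2; lia.
Qed.

Lemma suffix_sum_refine (V : nmodType) (F : T -> V) S j :
  uniq (order_of S) -> zero_sum_blocks F S.2 -> j \in order_of S ->
  suffix_sum F (order_of (refine G S)) j = suffix_sum F (order_of S) j.
Proof.
move=> uS SF jS.
have uS' : uniq (order_of (refine G S)) by rewrite (perm_uniq (perm_refine S)).
set rest := (pair_blocks (odd_blocks G S.2)).2.
have [l' [pairs_l' l'_odd odd_l']] := pair_blocks_regroup (odd_blocks G S.2).
have orderE :
    order_of (refine G S) = S.1 ++ flatten (rest :: even_blocks G S.2 ++ l').
  by rewrite /order_of /refine /= -catA !flatten_cat pairs_l'.
have S'F : zero_sum_blocks F (rest :: even_blocks G S.2 ++ l').
  move=> Q; rewrite inE mem_cat => /or3P[/eqP-> | | /l'_odd].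
  - have := pair_blocks_rest (odd_blocks G S.2); rewrite -/rest inE.
    by case/predU1P=> [-> | ]; rewrite ?big_nil // mem_filter => /andP[_ /SF].
  - by rewrite mem_filter => /andP[_ /SF].
  - by rewrite mem_filter => /andP[_ /SF].
rewrite orderE {1}/order_of.
have [j1 | j1] := boolP (j \in S.1).
  by rewrite !suffix_sum_catl // !sum_flatten_zero_sum_blocks.
rewrite [LHS]suffix_sum_catr // [RHS]suffix_sum_catr //.
move: jS; rewrite mem_cat (negbTE j1) => /flattenP[Q Q_S j_Q].
have {}uS : uniq (flatten S.2) by move: uS; rewrite cat_uniq => /and3P[].
have {}uS' : uniq (flatten (rest :: even_blocks G S.2 ++ l')).
  by move: uS'; rewrite orderE cat_uniq => /and3P[].
rewrite (suffix_sum_flatten uS SF Q_S j_Q) (suffix_sum_flatten uS' S'F _ j_Q) //.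
have [GQ | GQ] := eqVneq (\sum_(i <- Q) G i) 0.
  by rewrite inE mem_cat mem_filter GQ eqxx Q_S orbT.
have /odd_l' : Q \in odd_blocks G S.2 by rewrite mem_filter GQ.
by rewrite !inE mem_cat => /orP[-> | ->]; rewrite ?orbT.
Qed.

End Refinement.

(** * The adversary *)

Definition upper_ones_mx n : 'M['F_2]_n := \matrix_(i, j) (i <= j)%N%:R.

Definition order_mx n (p : 'S_n) : 'M['F_2]_n :=
  perm_mx p *m upper_ones_mx n *m (perm_mx p)^T.

Lemma order_mxE n (p : 'S_n) i j : order_mx p i j = (p i <= p j)%N%:R.
Proof. by rewrite /order_mx tr_perm_mx -row_permE -col_permE !mxE. Qed.

Lemma upper_ones_mx_trig n : upper_triangular (upper_ones_mx n).
Proof. by move=> i j lt_ji; rewrite mxE leqNgt lt_ji. Qed.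

Lemma upper_ones_mx_unit n : upper_ones_mx n \in unitmx.
Proof.
rewrite unitmxE (det_trig_rank val_inj) => [|i j lt_ji]; last first.
  by rewrite mxE leqNgt lt_ji.
by rewrite big1 ?unitr1 // => i _; rewrite mxE leqnn.
Qed.

Lemma order_mx_unit n (p : 'S_n) : order_mx p \in unitmx.
Proof. by rewrite !unitmx_mul tr_perm_mx !unitmx_perm upper_ones_mx_unit. Qed.

Lemma perm_of_index n (s : seq 'I_n) : perm_eq s (enum 'I_n) ->
  exists p : 'S_n, forall i, val (p i) = index i s.
Proof.
move=> s_perm; have s_all i : i \in s by rewrite (perm_mem s_perm) mem_enum.
have index_lt i : (index i s < n)%N.
  by rewrite -[n in (_ < n)%N]size_enum_ord -(perm_size s_perm) index_mem.
have index_inj : injective (fun i => Ordinal (index_lt i)).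
  by move=> i j [] /(index_inj i (s_all i) (s_all j)).
by exists (perm index_inj) => i; rewrite permE.
Qed.

Lemma big_drop_index (T : eqType) (V : nmodType) (F : T -> V) (s : seq T) k :
  uniq s -> \sum_(i <- s | (k <= index i s)%N) F i = \sum_(i <- drop k s) F i.
Proof.
elim: s k => [|x s IHs] [|k] /=; rewrite ?big_nil // => /andP[x_s us].
rewrite big_cons eqxx /= -IHs // [LHS]big_seq_cond [RHS]big_seq_cond.
apply: eq_bigl => i; case: (boolP (i \in s)) => //= i_s.
by rewrite ifN ?ltnS //; apply: contraNneq x_s => ->.
Qed.

Definition coord n (y : vertex n) (i : 'I_n) : 'F_2 := y i 0.

Lemma order_mx_mul_suffix_sum n (p : 'S_n) (s : seq 'I_n) :
  perm_eq s (enum 'I_n) -> (forall i, val (p i) = index i s) ->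
  forall (y : vertex n) j, (order_mx p *m y) j 0 = suffix_sum (coord y) s j.
Proof.
move=> s_perm p_index y j; rewrite mxE.
transitivity (\sum_(i | (index j s <= index i s)%N) y i 0).
  rewrite [RHS]big_mkcond; apply: eq_bigr => i _.
  by rewrite order_mxE !p_index mulr_natl mulrb.
transitivity (\sum_(i <- enum 'I_n | (index j s <= index i s)%N) y i 0).
  by rewrite big_enum_cond.
by rewrite -(perm_big _ s_perm) big_drop_index // (perm_uniq s_perm) enum_uniq.
Qed.

Section Simulation.
Variables (n : nat) (A : algorithm n).

Definition singleton_blocks : state 'I_n := ([::], [seq [:: i] | i <- enum 'I_n]).

Fixpoint simulate (k : nat) : state 'I_n * seq (vertex n * vertex n) :=
  if k is k'.+1 then
    let: (St, h) := simulate k' in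
    let y := A h + A [::] in
    let St' := refine (coord y) St in
    (* (M (y + e_f))_j, as (M e_f)_j = 1 when f comes last in the final order *)
    (St', rcons h (A h, \col_j (suffix_sum (coord y) (order_of St') j + 1)))
  else (singleton_blocks, [::]).

Definition sim_query k := A (simulate k).2.

Definition sim_shift k := sim_query k + A [::].

Lemma simulate_state k :
  (simulate k.+1).1 = refine (coord (sim_shift k)) (simulate k).1.
Proof. by rewrite /sim_shift /sim_query /=; case: (simulate k). Qed.

Lemma simulate_history k :
  (simulate k.+1).2 = rcons (simulate k).2 (sim_query k,
    \col_j (suffix_sum (coord (sim_shift k)) (order_of (simulate k.+1).1) j + 1)).
Proof. by rewrite simulate_state /sim_shift /sim_query /=; case: (simulate k). Qed.

Lemma simulate_invariant k :
  [/\ perm_eq (order_of (simulate k).1) (enum 'I_n),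
      forall Q, Q \in (simulate k).1.2 -> Q != [::]
    & (n %/ 2 ^ k <= size (simulate k).1.2)%N].
Proof.
elim: k => [|k [S_perm S_nonempty S_size]].
  split; rewrite /= /order_of /= ?flatten_seq1 //.
    by move=> Q /mapP[i _ ->].
  by rewrite size_map size_enum_ord divn1.
rewrite simulate_state; split.
- exact: perm_trans (perm_refine _ _) S_perm.
- exact: refine_nonempty.
- apply: leq_trans (size_refine _ _).
  by rewrite expnSr divnMA divn2 half_leq.
Qed.

Lemma simulate_settled k m : (k < m)%N ->
  zero_sum_blocks (coord (sim_shift k)) (simulate m).1.2 /\
  forall j, suffix_sum (coord (sim_shift k)) (order_of (simulate m).1) j =
            suffix_sum (coord (sim_shift k)) (order_of (simulate k.+1).1) j.
Proof.
elim: m => [// | m IHm]; rewrite ltnS leq_eqVlt => /predU1P[-> | lt_km].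
  by split=> //; rewrite simulate_state; apply: refine_zero_sum_self.
have [zero_sum settled] := IHm lt_km.
have [S_perm _ _] := simulate_invariant m.
rewrite simulate_state; split; first exact: refine_zero_sum.
move=> j; rewrite suffix_sum_refine //.
  by rewrite (perm_uniq S_perm) enum_uniq.
by rewrite (perm_mem S_perm) mem_enum.
Qed.

End Simulation.

Section Adversary.
Variables (n : nat) (A : algorithm n) (T : nat) (f : 'I_n) (p : 'S_n).
Let S := (simulate A T).1.
Hypothesis f_last : forall j, (index j (order_of S) <= index f (order_of S))%N.
Hypothesis f_block : f \in flatten S.2.
Hypothesis p_index : forall i, val (p i) = index i (order_of S).

Let o : outmap n := fun v => order_mx p *m (v + (A [::] + delta_mx f 0)).

Lemma adversary_answer k : (k < T)%N -> o (sim_query A k) =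
  \col_j (suffix_sum (coord (sim_shift A k)) (order_of (simulate A k.+1).1) j + 1).
Proof.
move=> lt_kT; apply/matrixP => j c; rewrite (ord1 c) [RHS]mxE.
have [S_perm _ _] := simulate_invariant A T.
rewrite /o addrA mulmxDr [LHS]mxE -colE [col _ _ _ _]mxE order_mxE !p_index f_last.
by rewrite (order_mx_mul_suffix_sum S_perm p_index) (simulate_settled A lt_kT).2.
Qed.

Lemma adversary_history k : (k <= T)%N -> history A o k = (simulate A k).2.
Proof.
elim: k => [// | k IHk] lt_kT.
have -> : history A o k.+1 =
    rcons (history A o k) (A (history A o k), o (A (history A o k))).
  reflexivity.
rewrite (IHk (ltnW lt_kT)) simulate_history -(adversary_answer lt_kT).
reflexivity.
Qed.

Lemma adversary_not_sink k : (k < T)%N -> o (sim_query A k) != 0.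
Proof.
move=> lt_kT; apply/eqP => sink.
have shiftE : sim_shift A k = - delta_mx f 0.
  apply/eqP; rewrite -addr_eq0 -addrA -[_ + _](mulKmx (order_mx_unit p)).
  by rewrite -/(o _) sink mulmx0.
have [P P_S f_P] := flattenP f_block.
have [S_perm _ _] := simulate_invariant A T.
have uS : uniq (order_of S) by rewrite (perm_uniq S_perm) enum_uniq.
have uP : uniq P.
  by apply: uniq_flatten_mem P_S; move: uS; rewrite cat_uniq => /and3P[].
have /= := (simulate_settled A lt_kT).1 P P_S.
under eq_bigr do rewrite /coord shiftE !mxE eqxx andbT.
by rewrite sumrN sum_indicator_uniq // => /eqP; rewrite oppr_eq0 oner_eq0.
Qed.

Lemma adversary_lower_bound t : finds_sink_within A o t -> (T < t)%N.
Proof.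
case=> k [lt_kt sink]; rewrite ltnNge; apply/negP => le_tT.
have lt_kT := leq_trans lt_kt le_tT.
move: sink; rewrite /query (adversary_history (ltnW lt_kT)).
exact/eqP/(adversary_not_sink lt_kT).
Qed.

End Adversary.

Lemma adversary n (A : algorithm n) T : (2 ^ T <= n)%N ->
  exists (p : 'S_n) (s : vertex n), forall t,
    finds_sink_within A (fun v => order_mx p *m (v + s)) t -> (T < t)%N.
Proof.
move=> le_2T_n; have [S_perm S_nonempty S_size] := simulate_invariant A T.
set S := (simulate A T).1 in S_perm S_nonempty S_size *.
have uS : uniq (order_of S) by rewrite (perm_uniq S_perm) enum_uniq.
have [x x_S] : exists x, x \in flatten S.2.
  have : (0 < size S.2)%N by apply: leq_trans S_size; rewrite divn_gt0 ?expn_gt0.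
  case: S.2 S_nonempty => [// | [|x Q] Qs] S_nonempty _.
    by have := S_nonempty _ (mem_head _ _).
  by exists x; rewrite /= inE eqxx.
pose f := last x (order_of S).
have f_block : f \in flatten S.2.
  rewrite /f /order_of last_cat.
  by case: (flatten S.2) x_S => // y s _; exact: (mem_last y s).
have f_last j : (index j (order_of S) <= index f (order_of S))%N.
  have : j \in order_of S by rewrite (perm_mem S_perm) mem_enum.
  rewrite /f; case: (order_of S) uS => [// | y s] uS j_S.
  by rewrite [last x _]/= index_last // -ltnS -[(size s).+1]/(size (y :: s)) index_mem.
have [p p_index] := perm_of_index S_perm.
by exists p, (A [::] + delta_mx f 0) => t; apply: adversary_lower_bound.
Qed.

(** * Realization by a P-matrix LCP *)

Definition sgnF2 (x : 'F_2) : R := (-1) ^+ (x != 0).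

Lemma sgnF2D x y : sgnF2 (x + y) = sgnF2 x * sgnF2 y.
Proof. by rewrite /sgnF2 F2_addr_neq0 signr_addb. Qed.

Lemma sgnF2_0 : sgnF2 0 = 1.
Proof. by rewrite /sgnF2 eqxx. Qed.

Lemma sgnF2_sqr x : sgnF2 x * sgnF2 x = 1.
Proof. by rewrite -expr2 sqrr_sign. Qed.

Section LCPRealization.
Variables (n : nat) (p : 'S_n) (c : vertex n).
Let d i := sgnF2 (c i 0).

Definition lcp_mx : 'M[R]_n :=
  \matrix_(i, k) (if i == k then 1 else if (p i < p k)%N then 2 * d i * d k else 0).

Definition lcp_rhs : 'cV[R]_n := \col_i d i.

Lemma lcp_mx_P : P_matrix lcp_mx.
Proof.
move=> S; rewrite /principal_submx.
rewrite (@det_trig_rank _ _ _ (fun a => val (p (enum_val a)))).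
- by rewrite big1 ?ltr01 // => a _; rewrite !mxE eqxx.
- by move=> a b /val_inj/perm_inj/enum_val_inj.
move=> a b lt_ba; rewrite !mxE ltnNge (ltnW lt_ba) ifN //.
by apply: contraTneq lt_ba => ->; rewrite ltnn.
Qed.

Variable J : {set 'I_n}.

Definition tail_sign k : R := \prod_(l | (p k < p l)%N) (-1) ^+ (l \in J).

(* For J = vset v the sign of entry j is (-1)^(v_j + c_j + sum of the v_l over
   the later coordinates l), i.e. it encodes (order_mx p *m v + c)_j. *)
Definition lcp_sol : 'cV[R]_n := \col_j ((-1) ^+ (j \in J) * d j * tail_sign j).

Lemma tail_sign_telescope j :
  tail_sign j + \sum_(k | (p j < p k)%N) (if k \in J then 2 * tail_sign k else 0) = 1.
Proof.
pose H m : R := \prod_(l | (m <= p l)%N) (-1) ^+ (l \in J).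
have tailE k : tail_sign k = H (p k).+1 by [].
have headE k : (-1) ^+ (k \in J) * tail_sign k = H (p k).
  rewrite /H (bigD1 k) //=; congr (_ * _); apply: eq_bigl => l.
  by rewrite ltn_neqAle andbC val_eqE (inj_eq perm_inj) eq_sym.
have termE k : (if k \in J then 2 * tail_sign k else 0) = H (p k).+1 - H (p k).
  rewrite -tailE -headE; case: (k \in J); last by rewrite expr0 mul1r subrr.
  by rewrite expr1 mulN1r opprK -mulr2n mulr_natl.
have sum_nat : \sum_(k | (p j < p k)%N) (H (p k).+1 - H (p k)) =
               \sum_((p j).+1 <= r < n) (H r.+1 - H r).
  by rewrite big_geq_mkord [RHS](reindex_inj (@perm_inj _ p)).
rewrite (eq_bigr _ (fun k _ => termE k)) sum_nat telescope_sumr ?ltn_ord //.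
have -> : H n = 1 by rewrite /H big1 // => l; rewrite leqNgt ltn_ord.
by rewrite -tailE addrC subrK.
Qed.

Lemma basis_mx_lcp_sol : basis_mx lcp_mx J *m lcp_sol = lcp_rhs.
Proof.
apply/matrixP => j c0; rewrite (ord1 c0) [RHS]mxE mxE (bigD1 j) //=.
have diagE : basis_mx lcp_mx J j j * lcp_sol j 0 = d j * tail_sign j.
  rewrite !mxE !eqxx !mulrA.
  have -> : (if j \in J then - 1 else 1) = (-1) ^+ (j \in J) :> R by case: (j \in J).
  by rewrite -expr2 sqrr_sign mul1r.
have offdiagE k : k != j -> basis_mx lcp_mx J j k * lcp_sol k 0 =
    if (p j < p k)%N then d j * (if k \in J then 2 * tail_sign k else 0) else 0.
  move=> neq_kj; rewrite !mxE eq_sym (negbTE neq_kj).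
  case: (p j < p k)%N; case: (k \in J); rewrite ?oppr0 ?mul0r ?mulr0 //.
  rewrite expr1 -[RHS]mulr1 -[X in _ = _ * X](sgnF2_sqr (c k 0)) /d; ring.
rewrite diagE (eq_bigr _ offdiagE) -big_mkcondr /=.
rewrite (eq_bigl (fun k => p j < p k)%N) => [|k]; last first.
  by case: eqVneq => [-> | //]; rewrite ltnn.
by rewrite -big_distrr -mulrDr tail_sign_telescope mulr1.
Qed.

Lemma basis_mx_lcp_unit : basis_mx lcp_mx J \in unitmx.
Proof.
rewrite unitmxE unitfE (@det_trig_rank _ _ _ (fun i => val (p i))).
- rewrite prodf_seq_neq0; apply/allP => i _; rewrite !mxE eqxx.
  by case: (i \in J); rewrite ?oppr_eq0 oner_eq0.
- by move=> i k /val_inj/perm_inj.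
move=> i k lt_ki; have neq_ik : (i == k) = false.
  by apply: contraTF lt_ki => /eqP->; rewrite ltnn.
by rewrite !mxE neq_ik ltnNge (ltnW lt_ki); case: (k \in J); rewrite ?oppr0.
Qed.

Lemma basic_sol_lcp : basic_sol lcp_mx lcp_rhs J = lcp_sol.
Proof. by rewrite /basic_sol -basis_mx_lcp_sol mulKmx // basis_mx_lcp_unit. Qed.

End LCPRealization.

Lemma order_mx_mulE n (p : 'S_n) (v : vertex n) i :
  (order_mx p *m v) i 0 = v i 0 + \sum_(l | (p i < p l)%N) v l 0.
Proof.
rewrite mxE (bigD1 i) //= order_mxE leqnn mul1r; congr (_ + _).
rewrite [LHS]big_mkcond [RHS]big_mkcond; apply: eq_bigr => k _.
have [-> | neq_ki] := eqVneq k i; first by rewrite ltnn.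
rewrite /= order_mxE leq_eqVlt val_eqE (inj_eq perm_inj) eq_sym (negbTE neq_ki).
by case: (p i < p k)%N; rewrite ?mul1r ?mul0r.
Qed.

Lemma order_mx_realizable n (p : 'S_n) (s : vertex n) :
  realizable (fun v => order_mx p *m (v + s)).
Proof.
pose c := order_mx p *m s.
exists (lcp_mx p c), (lcp_rhs c); split; [exact: lcp_mx_P | split].
  move=> J i; rewrite basic_sol_lcp mxE /sgnF2.
  rewrite !mulf_eq0 !signr_eq0 /= prodf_seq_eq0.
  by apply/hasPn => l _; rewrite signr_eq0 andbF.
move=> v; apply/matrixP => i c0.
rewrite (ord1 c0) [RHS]mxE basic_sol_lcp [in RHS]mxE.
have signE k : (-1) ^+ (k \in vset v) = sgnF2 (v k 0) by rewrite inE.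
rewrite /tail_sign signE (eq_bigr _ (fun l _ => signE l)).
rewrite -(big_morph _ sgnF2D sgnF2_0) -!sgnF2D /sgnF2 signr_lt0.
rewrite mulmxDr [LHS]mxE order_mx_mulE -/c addrAC.
by case: eqVneq => [-> | /F2_eq1].
Qed.

Local Close Scope ring_scope.

Theorem theorem24 :
  exists c N : nat, forall n : nat, (N <= n)%N ->
    forall A : algorithm n,
      exists o : outmap n,
        matousek_type o /\ realizable o /\
        forall t : nat, finds_sink_within A o t -> (trunc_log 2 n <= c * t)%N.
Proof.
exists 1, 1 => n n_gt0 A.
have [p [s sink_late]] := adversary A (trunc_logP (erefl : 1 < 2) n_gt0).
exists (fun v => order_mx p *m (v + s))%R; split; [|split].
- exists p, (upper_ones_mx n), s.
  by split; [exact: upper_ones_mx_trig | split; [exact: upper_ones_mx_unit |]].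
- exact: order_mx_realizable.
- by move=> t /sink_late; rewrite mul1n; apply: ltnW.
Qed.
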